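(* Let $\mathfrak K=(K,\bigsqcup,\odot,{}^*,{\sim},e)$ be an involutive generalized dynamic algebra, and define $\bullet\colon K\times\widetilde K\to\widetilde K$ by $k\bullet v={\sim}{\sim}(k\odot v)$. Then ${\sim}{\sim}{\sim}v={\sim}v$ for every $v\in K$, and $(\widetilde K,\bigvee,\bullet)$ is a left unital $K$-module (with $(\widetilde K,\preceq)$ a complete lattice whose joins are given by $\bigvee$), with least element ${\sim}{\sim}0$ and greatest element ${\sim}{\sim}1$.
   Context: An involutive unital quantale is $(Q,\bigsqcup,\odot,{}^*,e)$: $Q$ a complete join-semilattice (order $\sqsubseteq$, $0=\bigsqcup\emptyset$, $1=\bigsqcup Q$), $\odot$ associative and distributing over arbitrary joins in each argument, $e$ a two-sided unit, ${}^*$ with $x^{**}=x$, $(x\odot y)^*=y^*\odot x^*$, $(\bigsqcup_i x_i)^*=\bigsqcup_i x_i^*$. An involutive generalized dynamic algebra is $\mathfrak K=(K,\bigsqcup,\odot,{}^*,{\sim},e)$ with $(K,\bigsqcup,\odot,{}^*,e)$ an involutive unital quantale and ${\sim}\colon K\to K$ such that for all $x,y\in K$ and families $(x_i)_{i\in I}$: ${\sim}(x\odot{\sim}{\sim}y)={\sim}(x\odot y)$; ${\sim}(\bigsqcup_i{\sim}{\sim}x_i)={\sim}(\bigsqcup_i x_i)$; $({\sim}x)^*={\sim}x$; ${\sim}{\sim}({\sim}{\sim}x\odot y)={\sim}({\sim}x\sqcup{\sim}({\sim}x\sqcup y))$. Test set $\widetilde K=\{{\sim}k\mid k\in K\}$;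 for $W\subseteq\widetilde K$, $\bigvee W={\sim}{\sim}(\bigsqcup W)$; $k\preceq l$ iff $\bigvee\{k,l\}=l$. For a unital quantale $(Q,\bigsqcup,\odot,e)$, a left unital $Q$-module is a complete join-semilattice $(A,\bigvee)$ with a map $\bullet\colon Q\times A\to A$ such that $v\bullet\bigvee S=\bigvee_{s\in S}v\bullet s$, $(\bigsqcup T)\bullet a=\bigvee_{t\in T}t\bullet a$, $u\bullet(v\bullet a)=(u\odot v)\bullet a$, and $e\bullet a=a$. *)

Section Defs.
Variable K : Type.

Definition fam_join (sup : (K -> Prop) -> K) (I : Type) (x : I -> K) : K :=
  sup (fun y => exists i, y = x i).

Definition is_complete_join_semilattice (le : K -> K -> Prop) (sup : (K -> Prop) -> K) : Prop :=
  (forall x, le x x) /\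
  (forall x y, le x y -> le y x -> x = y) /\
  (forall x y z, le x y -> le y z -> le x z) /\
  (forall S : K -> Prop, forall x, S x -> le x (sup S)) /\
  (forall S : K -> Prop, forall u, (forall x, S x -> le x u) -> le (sup S) u).

Definition is_inv_unital_quantale (le : K -> K -> Prop) (sup : (K -> Prop) -> K)
    (mul : K -> K -> K) (star : K -> K) (e : K) : Prop :=
  is_complete_join_semilattice le sup /\
  (forall x y z, mul x (mul y z) = mul (mul x y) z) /\
  (forall x (I : Type) (y : I -> K),
      mul x (fam_join sup I y) = fam_join sup I (fun i => mul x (y i))) /\
  (forall (I : Type) (x : I -> K) y,
      mul (fam_join sup I x) y = fam_join sup I (fun i => mul (x i) y)) /\
  (forall x, mul e x = x) /\ (forall x, mul x e = x) /\
  (forall x, star (star x) = x) /\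
  (forall x y, star (mul x y) = mul (star y) (star x)) /\
  (forall (I : Type) (x : I -> K),
      star (fam_join sup I x) = fam_join sup I (fun i => star (x i))).

Definition join2 (sup : (K -> Prop) -> K) (x y : K) : K :=
  sup (fun z => z = x \/ z = y).

Definition is_IGDA (le : K -> K -> Prop) (sup : (K -> Prop) -> K)
    (mul : K -> K -> K) (star : K -> K) (neg : K -> K) (e : K) : Prop :=
  is_inv_unital_quantale le sup mul star e /\
  (forall x y, neg (mul x (neg (neg y))) = neg (mul x y)) /\
  (forall (I : Type) (x : I -> K),
      neg (fam_join sup I (fun i => neg (neg (x i)))) = neg (fam_join sup I x)) /\
  (forall x, star (neg x) = neg x) /\
  (forall x y, neg (neg (mul (neg (neg x)) y))
               = neg (join2 sup (neg x) (neg (join2 sup (neg x) y)))).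

Definition tests (neg : K -> K) (v : K) : Prop := exists k, v = neg k.

Definition tjoin (sup : (K -> Prop) -> K) (neg : K -> K) (W : K -> Prop) : K :=
  neg (neg (sup W)).

Definition tle (sup : (K -> Prop) -> K) (neg : K -> K) (k l : K) : Prop :=
  tjoin sup neg (fun z => z = k \/ z = l) = l.

Definition tact (mul : K -> K -> K) (neg : K -> K) (k v : K) : K :=
  neg (neg (mul k v)).

Definition bot (sup : (K -> Prop) -> K) : K := sup (fun _ => False).
Definition top (sup : (K -> Prop) -> K) : K := sup (fun _ => True).

Definition is_complete_lattice_on (A : K -> Prop) (leA : K -> K -> Prop)
    (vee : (K -> Prop) -> K) : Prop :=
  (forall x, A x -> leA x x) /\
  (forall x y, A x -> A y -> leA x y -> leA y x -> x = y) /\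
  (forall x y z, A x -> A y -> A z -> leA x y -> leA y z -> leA x z) /\
  (forall W : K -> Prop, (forall w, W w -> A w) ->
     A (vee W) /\
     (forall w, W w -> leA w (vee W)) /\
     (forall u, A u -> (forall w, W w -> leA w u) -> leA (vee W) u)) /\
  (forall W : K -> Prop, (forall w, W w -> A w) ->
     exists m, A m /\ (forall w, W w -> leA m w) /\
       (forall u, A u -> (forall w, W w -> leA u w) -> leA u m)).

Definition is_left_unital_module (sup : (K -> Prop) -> K) (mul : K -> K -> K) (e : K)
    (A : K -> Prop) (leA : K -> K -> Prop) (vee : (K -> Prop) -> K)
    (act : K -> K -> K) : Prop :=
  is_complete_lattice_on A leA vee /\
  (forall k a, A a -> A (act k a)) /\
  (forall v (S : K -> Prop), (forall s, S s -> A s) ->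
     act v (vee S) = vee (fun y => exists s, S s /\ y = act v s)) /\
  (forall (T : K -> Prop) a, A a ->
     act (sup T) a = vee (fun y => exists t, T t /\ y = act t a)) /\
  (forall u v a, A a -> act u (act v a) = act (mul u v) a) /\
  (forall a, A a -> act e a = a).

End Defs.


(* Write [c] for [~~].  The first two [~]-axioms of an IGDA say that [~] of a
   product or of a join only sees the [c]-images of the arguments; for a
   one-element family this gives [~~~ = ~], so the tests are exactly the
   fixed points of [c].  Hence [c] of a binary join depends only on the
   [c]-classes of the two arguments, which makes [≼] a partial order on tests
   whose joins are [⋁ W = c (⨆ W)]: every [w ∈ W] lies below [c (⨆ W)]
   since [c (w ⊔ c (⨆ W)) = c (⨆ W)], and if all [w ≼ u] then
   [c (⨆ W ⊔ u) = c (⨆_w (w ⊔ u) ⊔ u) = c u = u].  Meets are joins of lower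
   bounds, and the module laws are the quantale laws pushed through [c]. *)

Section CompleteJoinSemilattice.

Variables (K : Type) (le : K -> K -> Prop) (sup : (K -> Prop) -> K).
Hypothesis Hc : is_complete_join_semilattice K le sup.

Lemma le_refl x : le x x.
Proof. exact (proj1 Hc x). Qed.

Lemma le_trans x y z : le x y -> le y z -> le x z.
Proof. destruct Hc as [_ [_ [Htrans _]]]; exact (Htrans x y z). Qed.

Lemma sup_ub (S : K -> Prop) x : S x -> le x (sup S).
Proof. destruct Hc as [_ [_ [_ [Hub _]]]]; exact (Hub S x). Qed.

Lemma sup_least (S : K -> Prop) u : (forall x, S x -> le x u) -> le (sup S) u.
Proof. destruct Hc as [_ [_ [_ [_ Hlub]]]]; exact (Hlub S u). Qed.

Lemma sup_eq_bounds (S T : K -> Prop) :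
  (forall x, S x -> le x (sup T)) -> (forall x, T x -> le x (sup S)) -> sup S = sup T.
Proof.
  destruct Hc as [_ [Hanti _]]; intros HS HT.
  apply Hanti; apply sup_least; assumption.
Qed.

Lemma sup_equiv (S T : K -> Prop) : (forall x, S x <-> T x) -> sup S = sup T.
Proof.
  intros HST; apply sup_eq_bounds; intros x Hx; apply sup_ub, HST, Hx.
Qed.

Lemma sup_max (S : K -> Prop) a : S a -> (forall x, S x -> le x a) -> sup S = a.
Proof.
  destruct Hc as [_ [Hanti _]]; intros Ha Hbound.
  apply Hanti; [apply sup_least | apply sup_ub]; assumption.
Qed.

Lemma sup_single a : sup (fun z => z = a) = a.
Proof. apply sup_max; [reflexivity | intros x ->; apply le_refl]. Qed.

Lemma join2_ub_l x y : le x (join2 K sup x y).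
Proof. apply sup_ub; now left. Qed.

Lemma join2_ub_r x y : le y (join2 K sup x y).
Proof. apply sup_ub; now right. Qed.

Lemma join2_least x y u : le x u -> le y u -> le (join2 K sup x y) u.
Proof. intros Hx Hy; apply sup_least; now intros z [-> | ->]. Qed.

Lemma join2C x y : join2 K sup x y = join2 K sup y x.
Proof. apply sup_equiv; intro z; tauto. Qed.

Lemma join2_r x y : le x y -> join2 K sup x y = y.
Proof.
  intros Hxy; apply sup_max; [now right | intros z [-> | ->]; auto using le_refl].
Qed.

Lemma join2A x y z :
  join2 K sup x (join2 K sup y z) = join2 K sup (join2 K sup x y) z.
Proof.
  apply sup_eq_bounds; intros w [-> | ->].
  - eapply le_trans; [apply join2_ub_l | apply join2_ub_l].
  - apply join2_least; [eapply le_trans; [apply join2_ub_r | apply join2_ub_l] |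
                        apply join2_ub_r].
  - apply join2_least; [apply join2_ub_l |
                        eapply le_trans; [apply join2_ub_l | apply join2_ub_r]].
  - eapply le_trans; [apply join2_ub_r | apply join2_ub_r].
Qed.

Lemma fam_join_const (a : K) : fam_join K sup unit (fun _ => a) = a.
Proof. apply sup_max; [now exists tt | intros x [_ ->]; apply le_refl]. Qed.

Lemma fam_join_sig (S : K -> Prop) (f : K -> K) :
  fam_join K sup {s | S s} (fun i => f (proj1_sig i))
  = sup (fun y => exists s, S s /\ y = f s).
Proof.
  apply sup_equiv; intro y; split.
  - intros [[s Hs] ->]; now exists s.
  - intros [s [Hs ->]]; now exists (exist _ s Hs).
Qed.

Lemma sup_as_fam_join (S : K -> Prop) :
  sup S = fam_join K sup {s | S s} (@proj1_sig _ _).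
Proof.
  apply sup_equiv; intro y; split.
  - intros Hy; now exists (exist _ y Hy).
  - intros [[s Hs] ->]; exact Hs.
Qed.

Section NegatedJoins.

Variable neg : K -> K.
Hypothesis neg_fam_join_negneg : forall (I : Type) (x : I -> K),
  neg (fam_join K sup I (fun i => neg (neg (x i)))) = neg (fam_join K sup I x).

Lemma neg3 v : neg (neg (neg v)) = neg v.
Proof.
  pose proof (neg_fam_join_negneg unit (fun _ => v)) as H.
  now rewrite !fam_join_const in H.
Qed.

Lemma neg_sup_negneg (S : K -> Prop) :
  neg (sup (fun y => exists s, S s /\ y = neg (neg s))) = neg (sup S).
Proof.
  rewrite <- (fam_join_sig S (fun s => neg (neg s))),
          (sup_as_fam_join S).
  apply neg_fam_join_negneg.
Qed.

Lemma neg_sup_ext (S T : K -> Prop) :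
  (forall s, S s -> exists t, T t /\ neg (neg s) = neg (neg t)) ->
  (forall t, T t -> exists s, S s /\ neg (neg s) = neg (neg t)) ->
  neg (sup S) = neg (sup T).
Proof.
  intros HST HTS; rewrite <- (neg_sup_negneg S), <- (neg_sup_negneg T).
  f_equal; apply sup_equiv; intro y; split.
  - intros [s [Hs ->]]; destruct (HST s Hs) as [t [Ht ->]]; now exists t.
  - intros [t [Ht ->]]; destruct (HTS t Ht) as [s [Hs <-]]; now exists s.
Qed.

Lemma neg_sup_image_negneg (S : K -> Prop) (f : K -> K) :
  neg (sup (fun y => exists s, S s /\ y = neg (neg (f s))))
  = neg (sup (fun y => exists s, S s /\ y = f s)).
Proof.
  apply neg_sup_ext; intros y [s [Hs ->]].
  - exists (f s); split; [now exists s | apply neg3].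
  - exists (neg (neg (f s))); split; [now exists s | apply neg3].
Qed.

Lemma neg_join2_ext a b a' b' :
  neg (neg a) = neg (neg a') -> neg (neg b) = neg (neg b') ->
  neg (join2 K sup a b) = neg (join2 K sup a' b').
Proof.
  intros Ha Hb; apply neg_sup_ext.
  - intros s [-> | ->]; [exists a' | exists b']; auto.
  - intros t [-> | ->]; [exists a | exists b]; auto.
Qed.

Lemma neg_sup_const (S : K -> Prop) u :
  S u -> (forall s, S s -> neg (neg s) = neg (neg u)) -> neg (sup S) = neg u.
Proof.
  intros Hu HS; rewrite <- (sup_single u); apply neg_sup_ext.
  - intros s Hs; exists u; auto.
  - intros t ->; exists u; auto.
Qed.

Lemma tests_negnegK v : tests K neg v -> neg (neg v) = v.
Proof. intros [k ->]; apply neg3. Qed.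

Lemma tests_tjoin (W : K -> Prop) : tests K neg (tjoin K sup neg W).
Proof. now exists (neg (sup W)). Qed.

Lemma tleE k l : tle K sup neg k l = (neg (neg (join2 K sup k l)) = l).
Proof. reflexivity. Qed.

Lemma tle_refl x : tests K neg x -> tle K sup neg x x.
Proof.
  intros Hx; rewrite tleE, join2_r by apply le_refl.
  now apply tests_negnegK.
Qed.

Lemma tle_antisym x y : tle K sup neg x y -> tle K sup neg y x -> x = y.
Proof. rewrite !tleE, (join2C x y); congruence. Qed.

Lemma tle_trans x y z :
  tle K sup neg x y -> tle K sup neg y z -> tle K sup neg x z.
Proof.
  rewrite !tleE; intros Hxy Hyz.
  assert (Hz : neg (neg z) = neg (neg (join2 K sup y z)))
    by now rewrite <- (neg3 (neg (join2 K sup y z))), Hyz.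
  assert (Hy : neg (neg (join2 K sup x y)) = neg (neg y))
    by now rewrite <- (neg3 (neg (join2 K sup x y))), Hxy.
  rewrite (neg_join2_ext x z x (join2 K sup y z)), join2A,
          (neg_join2_ext (join2 K sup x y) z y z) by auto.
  exact Hyz.
Qed.

Lemma tle_negneg_of_le x b : le x b -> tle K sup neg x (neg (neg b)).
Proof.
  intros Hxb; rewrite tleE, (neg_join2_ext x (neg (neg b)) x b),
                      join2_r by auto using neg3.
  reflexivity.
Qed.

Lemma tjoin_ub (W : K -> Prop) w : W w -> tle K sup neg w (tjoin K sup neg W).
Proof. intros Hw; apply tle_negneg_of_le, sup_ub, Hw. Qed.

Lemma tjoin_least (W : K -> Prop) u :
  tests K neg u -> (forall w, W w -> tle K sup neg w u) ->
  tle K sup neg (tjoin K sup neg W) u.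
Proof.
  intros Hu HW; rewrite tleE; unfold tjoin.
  set (Z := fun z => (exists w, W w /\ z = join2 K sup w u) \/ z = u).
  assert (HZ : join2 K sup (sup W) u = sup Z).
  { apply sup_eq_bounds.
    - intros x [-> | ->].
      + apply sup_least; intros w Hw.
        apply le_trans with (join2 K sup w u);
          [apply join2_ub_l | apply sup_ub; left; now exists w].
      + apply sup_ub; now right.
    - intros x [[w [Hw ->]] | ->]; [| apply join2_ub_r].
      apply join2_least; [| apply join2_ub_r].
      apply le_trans with (sup W); [apply sup_ub, Hw | apply join2_ub_l]. }
  assert (HZu : forall z, Z z -> neg (neg z) = neg (neg u)).
  { intros z [[w [Hw ->]] | ->]; [| reflexivity].
    pose proof (HW w Hw) as Hwu; rewrite tleE in Hwu.
    rewrite Hwu; symmetry; now apply tests_negnegK. }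
  rewrite (neg_join2_ext _ u (sup W) u), HZ, (neg_sup_const Z u)
    by (now right || auto using neg3).
  now apply tests_negnegK.
Qed.

Lemma tests_complete_lattice :
  is_complete_lattice_on K (tests K neg) (tle K sup neg) (tjoin K sup neg).
Proof.
  repeat split.
  - exact tle_refl.
  - intros x y _ _; apply tle_antisym.
  - intros x y z _ _ _; apply tle_trans.
  - intros; apply tests_tjoin.
  - intros; now apply tjoin_ub.
  - intros; now apply tjoin_least.
  - intros W HW.
    exists (tjoin K sup neg (fun m => tests K neg m /\ forall w, W w -> tle K sup neg m w)).
    split; [apply tests_tjoin | split].
    + intros w Hw; apply tjoin_least; [now apply HW |]; intros m [_ Hm]; now apply Hm.
    + intros m Hm Hlow; now apply tjoin_ub.
Qed.

Section Action.

Variables (mul : K -> K -> K) (e : K).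
Hypothesis mulA : forall x y z, mul x (mul y z) = mul (mul x y) z.
Hypothesis mul_fam_join_r : forall x (I : Type) (y : I -> K),
  mul x (fam_join K sup I y) = fam_join K sup I (fun i => mul x (y i)).
Hypothesis mul_fam_join_l : forall (I : Type) (x : I -> K) y,
  mul (fam_join K sup I x) y = fam_join K sup I (fun i => mul (x i) y).
Hypothesis mul1 : forall x, mul e x = x.
Hypothesis neg_mul_negneg : forall x y, neg (mul x (neg (neg y))) = neg (mul x y).

Lemma mul_sup_r v (S : K -> Prop) :
  mul v (sup S) = sup (fun y => exists s, S s /\ y = mul v s).
Proof.
  now rewrite sup_as_fam_join, mul_fam_join_r,
              (fam_join_sig S (mul v)).
Qed.

Lemma mul_sup_l (T : K -> Prop) a :
  mul (sup T) a = sup (fun y => exists t, T t /\ y = mul t a).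
Proof.
  now rewrite sup_as_fam_join, mul_fam_join_l,
              (fam_join_sig T (fun t => mul t a)).
Qed.

Lemma tact_tjoin_r v (S : K -> Prop) :
  tact K mul neg v (tjoin K sup neg S)
  = tjoin K sup neg (fun y => exists s, S s /\ y = tact K mul neg v s).
Proof.
  unfold tact, tjoin; rewrite neg_mul_negneg, mul_sup_r.
  f_equal; symmetry; apply (neg_sup_image_negneg S (mul v)).
Qed.

Lemma tact_sup_l (T : K -> Prop) a :
  tact K mul neg (sup T) a
  = tjoin K sup neg (fun y => exists t, T t /\ y = tact K mul neg t a).
Proof.
  unfold tact, tjoin; rewrite mul_sup_l.
  f_equal; symmetry; apply (neg_sup_image_negneg T (fun t => mul t a)).
Qed.

Lemma tact_mul u v a : tact K mul neg u (tact K mul neg v a) = tact K mul neg (mul u v) a.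
Proof. unfold tact; now rewrite neg_mul_negneg, mulA. Qed.

Lemma tests_left_unital_module :
  is_left_unital_module K sup mul e (tests K neg) (tle K sup neg) (tjoin K sup neg)
    (tact K mul neg).
Proof.
  split; [exact tests_complete_lattice |].
  split; [intros k a _; now exists (neg (mul k a)) |].
  split; [intros v S _; apply tact_tjoin_r |].
  split; [intros T a _; apply tact_sup_l |].
  split; [intros u v a _; apply tact_mul |].
  intros a Ha; unfold tact; rewrite mul1; now apply tests_negnegK.
Qed.

End Action.

End NegatedJoins.

End CompleteJoinSemilattice.

Theorem theorem3p3 (K : Type) (le : K -> K -> Prop) (sup : (K -> Prop) -> K)
    (mul : K -> K -> K) (star : K -> K) (neg : K -> K) (e : K) :
  is_IGDA K le sup mul star neg e ->
  (forall v : K, neg (neg (neg v)) = neg v) /\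
  is_left_unital_module K sup mul e (tests K neg) (tle K sup neg) (tjoin K sup neg)
    (tact K mul neg) /\
  tests K neg (neg (neg (bot K sup))) /\
  (forall v, tests K neg v -> tle K sup neg (neg (neg (bot K sup))) v) /\
  tests K neg (neg (neg (top K sup))) /\
  (forall v, tests K neg v -> tle K sup neg v (neg (neg (top K sup)))).
Proof.
  intros [[Hc [HmulA [Hmul_r [Hmul_l [Hmul1 _]]]]] [Hneg_mul [Hneg_join _]]].
  split; [exact (neg3 K le sup Hc neg Hneg_join) |].
  split; [exact (tests_left_unital_module K le sup Hc neg Hneg_join
                   mul e HmulA Hmul_r Hmul_l Hmul1 Hneg_mul) |].
  split; [apply (tests_tjoin K sup neg (fun _ => False)) |].
  split.
  { intros v Hv; apply (tjoin_least K le sup Hc neg Hneg_join (fun _ => False) v Hv).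
    intros w []. }
  split; [apply (tests_tjoin K sup neg (fun _ => True)) |].
  intros v _; apply (tle_negneg_of_le K le sup Hc neg Hneg_join), (sup_ub K le sup Hc).
  exact I.
Qed.
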